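(* Let $(V,\nu)$ be a gauged space and $S\subseteq V$ a linear subspace. Then $S$ is a gauge ideal of $(V,\nu)$ if and only if there exist a gauged space $(W,\omega)$ and a gauge-bounded linear map $\phi:V\to W$ with $S=\ker\phi$. Moreover, when $S$ is a gauge ideal, $q(x+S)=\inf\{\nu(y):y\in x+S\}$ is a proper gauge on the algebraic quotient $V/S$, and the quotient map $\pi:(V,\nu)\to(V/S,q)$ is gauge-contractive with kernel $S$.
   Context: A gauge on a real vector space $V$ is a map $\nu:V\to[0,\infty)$ with $\nu(x+y)\le\nu(x)+\nu(y)$ and $\nu(tx)=t\nu(x)$ for all $x,y\in V$, $t>0$; it is proper if for every $x\neq0$, $\nu(x)\neq0$ or $\nu(-x)\neq0$; a gauged space is a pair $(V,\nu)$ with $\nu$ a proper gauge. A linear map $\phi:(V,\nu)\to(W,\omega)$ is gauge-bounded if there is $C>0$ with $\omega(\phi(x))\le C\nu(x)$ for all $x$, and gauge-contractive if $C=1$ works. A subspace $S$ is a gauge ideal if whenever $x\in V$ and there are sequences $(a_n),(b_n)\subseteq S$ with $\nu(x-a_n)\to0$ and $\nu(b_n-x)\to0$, then $x\in S$. *)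

From Stdlib Require Import Reals.
Open Scope R_scope.

Record RVS := {
  car :> Type;
  vzero : car;
  vadd : car -> car -> car;
  vopp : car -> car;
  vscal : R -> car -> car;
  vadd_assoc : forall x y z, vadd x (vadd y z) = vadd (vadd x y) z;
  vadd_comm : forall x y, vadd x y = vadd y x;
  vadd_0 : forall x, vadd x vzero = x;
  vadd_opp : forall x, vadd x (vopp x) = vzero;
  vscal_assoc : forall a b x, vscal a (vscal b x) = vscal (a * b) x;
  vscal_1 : forall x, vscal 1 x = x;
  vscal_distr_v : forall a x y, vscal a (vadd x y) = vadd (vscal a x) (vscal a y);
  vscal_distr_s : forall a b x, vscal (a + b) x = vadd (vscal a x) (vscal b x)
}.

Arguments vzero {_}.
Arguments vadd {_} _ _.
Arguments vopp {_} _.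
Arguments vscal {_} _ _.

Definition vsub {V : RVS} (x y : V) : V := vadd x (vopp y).

Definition is_linear {V W : RVS} (f : V -> W) : Prop :=
  (forall x y, f (vadd x y) = vadd (f x) (f y)) /\
  (forall (a : R) x, f (vscal a x) = vscal a (f x)).

Definition is_subspace {V : RVS} (S : V -> Prop) : Prop :=
  S vzero /\ (forall x y, S x -> S y -> S (vadd x y)) /\
  (forall (a : R) x, S x -> S (vscal a x)).

Definition is_gauge {V : RVS} (nu : V -> R) : Prop :=
  (forall x, 0 <= nu x) /\
  (forall x y, nu (vadd x y) <= nu x + nu y) /\
  (forall (t : R) x, 0 < t -> nu (vscal t x) = t * nu x).

Definition is_proper_gauge {V : RVS} (nu : V -> R) : Prop :=
  is_gauge nu /\ (forall x, x <> vzero -> nu x <> 0 \/ nu (vopp x) <> 0).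

Definition gauge_bounded {V W : RVS} (nu : V -> R) (om : W -> R) (f : V -> W) : Prop :=
  exists C : R, 0 < C /\ forall x, om (f x) <= C * nu x.

Definition gauge_contractive {V W : RVS} (nu : V -> R) (om : W -> R) (f : V -> W) : Prop :=
  forall x, om (f x) <= nu x.

Definition gauge_ideal {V : RVS} (nu : V -> R) (S : V -> Prop) : Prop :=
  is_subspace S /\
  forall (x : V) (a b : nat -> V),
    (forall n, S (a n)) -> (forall n, S (b n)) ->
    Un_cv (fun n => nu (vsub x (a n))) 0 ->
    Un_cv (fun n => nu (vsub (b n) x)) 0 ->
    S x.

Definition is_glb (E : R -> Prop) (m : R) : Prop :=
  (forall r, E r -> m <= r) /\ (forall m', (forall r, E r -> m' <= r) -> m' <= m).

Definition kernel_is {V W : RVS} (f : V -> W) (S : V -> Prop) : Prop :=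
  forall x, S x <-> f x = vzero.

(* If phi is gauge-bounded with kernel S and x is approximated from below and
   from above by elements of S, then omega(phi x) and omega(-phi x) are bounded
   by multiples of quantities tending to 0, so phi x = 0 by properness of omega.
   Conversely, for a gauge ideal S the infimum gauge q on V/S is a gauge and pi
   is contractive; if q(x+S) = q(-x+S) = 0, choosing representatives of x+S and
   of -x+S with nu-values below 1/(n+1) yields sequences in S approximating x
   from both sides, so x lies in S and x+S = 0.  Hence pi itself witnesses the
   kernel characterisation. *)

From Stdlib Require Import Reals Lra Lia Classical
  FunctionalExtensionality PropExtensionality ProofIrrelevance
  IndefiniteDescription.
Open Scope R_scope.

Section VectorAlgebra.
Variable V : RVS.
Implicit Types x y z : V.

Lemma vadd_0_l x : vadd vzero x = x.
Proof. rewrite vadd_comm; apply vadd_0. Qed.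

Lemma vadd_opp_l x : vadd (vopp x) x = vzero.
Proof. rewrite vadd_comm; apply vadd_opp. Qed.

Lemma vadd_cancel_l z x y : vadd z x = vadd z y -> x = y.
Proof.
  intros H.
  rewrite <- (vadd_0_l x), <- (vadd_0_l y), <- (vadd_opp_l z),
    <- !vadd_assoc, H.
  reflexivity.
Qed.

Lemma vscal_0_l x : vscal 0 x = vzero.
Proof.
  apply (vadd_cancel_l (vscal 0 x)).
  rewrite vadd_0, <- vscal_distr_s, Rplus_0_r; reflexivity.
Qed.

Lemma vscal_0_r (a : R) : vscal a (@vzero V) = vzero.
Proof.
  apply (vadd_cancel_l (vscal a vzero)).
  rewrite vadd_0, <- vscal_distr_v, vadd_0; reflexivity.
Qed.

Lemma vopp_vscal x : vopp x = vscal (-1) x.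
Proof.
  apply (vadd_cancel_l x).
  rewrite vadd_opp, <- (vscal_1 V x) at 1.
  rewrite <- vscal_distr_s, Rplus_opp_r, vscal_0_l; reflexivity.
Qed.

Lemma vopp_0 : vopp (@vzero V) = vzero.
Proof. rewrite vopp_vscal; apply vscal_0_r. Qed.

Lemma vopp_vadd x y : vopp (vadd x y) = vadd (vopp x) (vopp y).
Proof. rewrite !vopp_vscal; apply vscal_distr_v. Qed.

Lemma vopp_involutive x : vopp (vopp x) = x.
Proof.
  rewrite !vopp_vscal, vscal_assoc.
  replace (-1 * -1) with 1 by ring; apply vscal_1.
Qed.

Lemma vscal_vopp (a : R) x : vscal a (vopp x) = vopp (vscal a x).
Proof. rewrite !vopp_vscal, !vscal_assoc, Rmult_comm; reflexivity. Qed.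

Lemma vsub_diag x : vsub x x = vzero.
Proof. apply vadd_opp. Qed.

Lemma vsub_0_r x : vsub x vzero = x.
Proof. unfold vsub; rewrite vopp_0, vadd_0; reflexivity. Qed.

Lemma vsub_0_l x : vsub vzero x = vopp x.
Proof. apply vadd_0_l. Qed.

Lemma vsub_vsub_r x y : vsub x (vsub x y) = y.
Proof.
  unfold vsub.
  rewrite vopp_vadd, vopp_involutive, vadd_assoc, vadd_opp, vadd_0_l.
  reflexivity.
Qed.

Lemma vsub_vadd_l x y : vsub (vadd x y) x = y.
Proof.
  unfold vsub.
  rewrite (vadd_comm V x y), <- vadd_assoc, vadd_opp, vadd_0; reflexivity.
Qed.

Lemma vsub_swap x y : vsub y x = vopp (vsub x y).
Proof.
  unfold vsub; rewrite vopp_vadd, vopp_involutive; apply vadd_comm.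
Qed.

Lemma vsub_trans x y z : vadd (vsub x y) (vsub y z) = vsub x z.
Proof.
  unfold vsub.
  rewrite <- vadd_assoc, (vadd_assoc V (vopp y)), vadd_opp_l, vadd_0_l.
  reflexivity.
Qed.

Lemma vsub_vadd2 (a b c d : V) :
  vsub (vadd a b) (vadd c d) = vadd (vsub a c) (vsub b d).
Proof.
  unfold vsub; rewrite vopp_vadd, !vadd_assoc; f_equal.
  rewrite <- !vadd_assoc; f_equal; apply vadd_comm.
Qed.

Lemma vsub_vscal (a : R) x y : vsub (vscal a x) (vscal a y) = vscal a (vsub x y).
Proof. unfold vsub; rewrite vscal_distr_v, vscal_vopp; reflexivity. Qed.

Lemma vsub_vopp x y : vsub (vopp x) (vopp y) = vopp (vsub x y).
Proof. unfold vsub; rewrite vopp_vadd; reflexivity. Qed.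

End VectorAlgebra.

Section LinearMaps.
Variables V W : RVS.
Variable f : V -> W.
Hypothesis f_lin : is_linear f.

Lemma linear_0 : f vzero = vzero.
Proof.
  apply (vadd_cancel_l W (f vzero)).
  rewrite <- (proj1 f_lin), !vadd_0; reflexivity.
Qed.

Lemma linear_opp x : f (vopp x) = vopp (f x).
Proof. rewrite !vopp_vscal, (proj2 f_lin); reflexivity. Qed.

Lemma linear_sub x y : f (vsub x y) = vsub (f x) (f y).
Proof. unfold vsub; rewrite (proj1 f_lin), linear_opp; reflexivity. Qed.

Lemma kernel_is_of_fibres (S : V -> Prop) :
  (forall x y, f x = f y <-> S (vsub x y)) -> kernel_is f S.
Proof.
  intros Hfib x.
  rewrite <- linear_0, Hfib, vsub_0_r; tauto.
Qed.

End LinearMaps.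

Section Subspaces.
Variable V : RVS.
Variable S : V -> Prop.
Hypothesis S_sub : is_subspace S.

Lemma subspace_add x y : S x -> S y -> S (vadd x y).
Proof. apply S_sub. Qed.

Lemma subspace_scal (a : R) x : S x -> S (vscal a x).
Proof. apply S_sub. Qed.

Lemma subspace_opp x : S x -> S (vopp x).
Proof. rewrite vopp_vscal; apply subspace_scal. Qed.

End Subspaces.

Lemma Un_cv_0_of_lt_inv_succ (u : nat -> R) :
  (forall n, 0 <= u n) -> (forall n, u n < / INR (S n)) -> Un_cv u 0.
Proof.
  intros Hpos Hlt eps Heps.
  destruct (archimed_cor1 eps Heps) as [N [HN HN0]].
  exists N; intros n Hn; unfold Rdist.
  rewrite Rminus_0_r, Rabs_pos_eq by auto.
  apply Rlt_le_trans with (/ INR (S n)); auto.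
  apply Rle_trans with (/ INR N); [| lra].
  apply Rinv_le_contravar; [apply lt_0_INR; lia | apply le_INR; lia].
Qed.

Lemma eq_0_of_le_mult_Un_cv_0 (c C : R) (u : nat -> R) :
  0 <= c -> 0 < C -> (forall n, c <= C * u n) -> Un_cv u 0 -> c = 0.
Proof.
  intros Hc HC Hbound Hu.
  destruct (Req_dec c 0) as [| Hne]; auto; exfalso.
  destruct (Hu (c / C)) as [N HN]; [apply Rdiv_lt_0_compat; lra |].
  specialize (HN N (le_n N)); unfold Rdist in HN; rewrite Rminus_0_r in HN.
  assert (C * u N < C * (c / C)).
  { apply Rmult_lt_compat_l; [lra | eapply Rle_lt_trans; [apply Rle_abs | exact HN]]. }
  replace (C * (c / C)) with c in H by (field; lra).
  specialize (Hbound N); lra.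
Qed.

Lemma gauge_bounded_of_contractive (V W : RVS) (nu : V -> R) (om : W -> R)
    (f : V -> W) :
  gauge_contractive nu om f -> gauge_bounded nu om f.
Proof.
  intros Hf; exists 1; split; [lra |].
  intros x; rewrite Rmult_1_l; apply Hf.
Qed.

Lemma kernel_gauge_ideal (V W : RVS) (nu : V -> R) (om : W -> R)
    (phi : V -> W) (S : V -> Prop) :
  is_subspace S -> is_proper_gauge om -> is_linear phi ->
  gauge_bounded nu om phi -> kernel_is phi S -> gauge_ideal nu S.
Proof.
  intros HS [[om_ge0 _] om_proper] phi_lin [C [HC Hbound]] Hker.
  split; [exact HS |]; intros x a b Ha Hb Hxa Hbx.
  apply Hker, NNPP; intros Hx.
  assert (om (phi x) = 0).
  { apply (eq_0_of_le_mult_Un_cv_0 _ C (fun n => nu (vsub x (a n))));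
      [apply om_ge0 | exact HC | intros n | exact Hxa].
    rewrite <- Hbound, linear_sub, (proj1 (Hker _) (Ha n)), vsub_0_r by exact phi_lin.
    apply Rle_refl. }
  assert (om (vopp (phi x)) = 0).
  { apply (eq_0_of_le_mult_Un_cv_0 _ C (fun n => nu (vsub (b n) x)));
      [apply om_ge0 | exact HC | intros n | exact Hbx].
    rewrite <- Hbound, linear_sub, (proj1 (Hker _) (Hb n)), vsub_0_l
      by exact phi_lin.
    apply Rle_refl. }
  destruct (om_proper _ Hx); auto.
Qed.

Section InfimumGauge.
Variables V Q : RVS.
Variable nu : V -> R.
Variable pi : V -> Q.
Variable q : Q -> R.
Hypothesis nu_gauge : is_gauge nu.
Hypothesis pi_lin : is_linear pi.
Hypothesis q_glb :
  forall z, is_glb (fun r => exists y, pi y = z /\ r = nu y) (q z).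

Lemma infimum_gauge_contractive : gauge_contractive nu q pi.
Proof. intros y; apply (proj1 (q_glb (pi y))); exists y; auto. Qed.

Lemma infimum_gauge_ge z m : (forall y, pi y = z -> m <= nu y) -> m <= q z.
Proof. intros H; apply (proj2 (q_glb z)); intros r [y [<- ->]]; auto. Qed.

Lemma infimum_gauge_ge0 z : 0 <= q z.
Proof. apply infimum_gauge_ge; intros y _; apply nu_gauge. Qed.

Lemma infimum_gauge_subadditive z1 z2 : q (vadd z1 z2) <= q z1 + q z2.
Proof.
  enough (q (vadd z1 z2) - q z2 <= q z1) by lra.
  apply infimum_gauge_ge; intros y1 <-.
  enough (q (vadd (pi y1) z2) - nu y1 <= q z2) by lra.
  apply infimum_gauge_ge; intros y2 <-.
  rewrite <- (proj1 pi_lin).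
  pose proof (infimum_gauge_contractive (vadd y1 y2)).
  pose proof (proj1 (proj2 nu_gauge) y1 y2).
  lra.
Qed.

Lemma infimum_gauge_scal_le t z : 0 < t -> q (vscal t z) <= t * q z.
Proof.
  intros Ht.
  enough (q (vscal t z) / t <= q z).
  { apply (Rmult_le_reg_l (/ t)); [apply Rinv_0_lt_compat; lra |].
    replace (/ t * (t * q z)) with (q z) by (field; lra); lra. }
  apply infimum_gauge_ge; intros y <-.
  rewrite <- (proj2 pi_lin).
  pose proof (infimum_gauge_contractive (vscal t y)) as Hle.
  rewrite (proj2 (proj2 nu_gauge)) in Hle by exact Ht.
  apply (Rmult_le_reg_l t); [exact Ht |].
  field_simplify; lra.
Qed.

Lemma infimum_gauge_is_gauge : is_gauge q.
Proof.
  split; [exact infimum_gauge_ge0 | split; [exact infimum_gauge_subadditive |]].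
  intros t z Ht; apply Rle_antisym; [apply infimum_gauge_scal_le; exact Ht |].
  pose proof (infimum_gauge_scal_le (/ t) (vscal t z)
    (Rinv_0_lt_compat _ Ht)) as Hle.
  rewrite vscal_assoc, Rinv_l, vscal_1 in Hle by lra.
  apply (Rmult_le_reg_l (/ t)); [apply Rinv_0_lt_compat; lra |].
  replace (/ t * (t * q z)) with (q z) by (field; lra); lra.
Qed.

Lemma infimum_gauge_null_approx z :
  q z = 0 ->
  exists f : nat -> V, forall n, pi (f n) = z /\ nu (f n) < / INR (S n).
Proof.
  intros Hz; apply functional_choice with (R := fun n y => pi y = z /\ nu y < / INR (S n)).
  intros n; apply NNPP; intros Hnone.
  assert (/ INR (S n) <= q z).
  { apply infimum_gauge_ge; intros y Hy.
    apply Rnot_lt_le; intros Hlt; apply Hnone; eauto. }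
  assert (0 < / INR (S n)) by (apply Rinv_0_lt_compat, lt_0_INR; lia).
  lra.
Qed.

Variable S : V -> Prop.
Hypothesis pi_fibres : forall x y, pi x = pi y <-> S (vsub x y).

Lemma infimum_gauge_proper :
  gauge_ideal nu S -> forall z, z <> vzero -> q z <> 0 \/ q (vopp z) <> 0.
Proof.
  intros [_ S_ideal] z Hz.
  pose proof (kernel_is_of_fibres _ _ _ pi_lin _ pi_fibres) as Hker.
  destruct (Req_dec (q z) 0) as [Hq | Hq]; [| auto].
  destruct (Req_dec (q (vopp z)) 0) as [Hqopp | Hqopp]; [| auto].
  exfalso; apply Hz.
  destruct (infimum_gauge_null_approx _ Hq) as [f Hf].
  (* An empty fibre would have no finite infimum, so no surjectivity of pi
     is needed to write z = pi x. *)
  assert (Hx : pi (f O) = z) by apply Hf.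
  set (x := f O) in Hx; subst z.
  destruct (infimum_gauge_null_approx _ Hqopp) as [g Hg].
  apply Hker, (S_ideal x (fun n => vsub x (f n)) (fun n => vadd x (g n))).
  - intros n; apply Hker.
    rewrite (linear_sub _ _ _ pi_lin), (proj1 (Hf n)); apply vsub_diag.
  - intros n; apply Hker.
    rewrite (proj1 pi_lin), (proj1 (Hg n)), <- (linear_opp _ _ _ pi_lin),
      <- (proj1 pi_lin), vadd_opp.
    apply linear_0, pi_lin.
  - apply Un_cv_0_of_lt_inv_succ; intros n; rewrite vsub_vsub_r;
      [apply nu_gauge | apply Hf].
  - apply Un_cv_0_of_lt_inv_succ; intros n; rewrite vsub_vadd_l;
      [apply nu_gauge | apply Hg].
Qed.

Lemma infimum_gauge_quotient :
  gauge_ideal nu S ->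
  is_proper_gauge q /\ gauge_contractive nu q pi /\ kernel_is pi S.
Proof.
  intros HI.
  split; [split; [exact infimum_gauge_is_gauge | exact (infimum_gauge_proper HI)] |].
  split; [exact infimum_gauge_contractive |].
  exact (kernel_is_of_fibres _ _ _ pi_lin _ pi_fibres).
Qed.

End InfimumGauge.

Section QuotientSpace.
Variable V : RVS.
Variable S : V -> Prop.
Hypothesis S_sub : is_subspace S.

(* Cosets are encoded as predicates, so that equality of cosets is the
   extensional one (via functional and propositional extensionality). *)
Definition coset_car := {P : V -> Prop | exists x, P = (fun y => S (vsub y x))}.

Definition coset (x : V) : coset_car :=
  exist _ (fun y => S (vsub y x)) (ex_intro _ x eq_refl).

Lemma coset_car_ext (P P' : coset_car) : proj1_sig P = proj1_sig P' -> P = P'.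
Proof. destruct P, P'; simpl; intros ->; f_equal; apply proof_irrelevance. Qed.

Lemma coset_eq x y : coset x = coset y <-> S (vsub x y).
Proof.
  split.
  - intros H; apply (f_equal (fun P => proj1_sig P x)) in H; simpl in H.
    rewrite <- H, vsub_diag; apply S_sub.
  - intros H; apply coset_car_ext; simpl.
    apply functional_extensionality; intros z.
    apply propositional_extensionality; split; intros Hz.
    + rewrite <- (vsub_trans V z x y); apply subspace_add; auto.
    + rewrite <- (vsub_trans V z y x); apply subspace_add; auto.
      rewrite vsub_swap; apply subspace_opp; auto.
Qed.

Definition coset_rep (P : coset_car) : V :=
  proj1_sig (constructive_indefinite_description _ (proj2_sig P)).

Lemma coset_rep_K P : coset (coset_rep P) = P.
Proof.
  apply coset_car_ext; unfold coset_rep.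
  destruct (constructive_indefinite_description _ (proj2_sig P)) as [x Hx].
  simpl; rewrite Hx; reflexivity.
Qed.

Lemma coset_surj P : exists x, coset x = P.
Proof. exists (coset_rep P); apply coset_rep_K. Qed.

Lemma coset_rep_coset x : S (vsub (coset_rep (coset x)) x).
Proof. apply coset_eq, coset_rep_K. Qed.

Definition coset_add P P' := coset (vadd (coset_rep P) (coset_rep P')).
Definition coset_opp P := coset (vopp (coset_rep P)).
Definition coset_scal a P := coset (vscal a (coset_rep P)).

Lemma coset_add_coset x y : coset_add (coset x) (coset y) = coset (vadd x y).
Proof.
  apply coset_eq; rewrite vsub_vadd2; apply subspace_add; auto;
    apply coset_rep_coset.
Qed.

Lemma coset_opp_coset x : coset_opp (coset x) = coset (vopp x).
Proof.
  apply coset_eq; rewrite vsub_vopp; apply subspace_opp; auto;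
    apply coset_rep_coset.
Qed.

Lemma coset_scal_coset a x : coset_scal a (coset x) = coset (vscal a x).
Proof.
  apply coset_eq; rewrite vsub_vscal; apply subspace_scal; auto;
    apply coset_rep_coset.
Qed.

Ltac coset_elim P := let x := fresh "x" in destruct (coset_surj P) as [x <-].

Definition quotient_space : RVS.
Proof.
  refine {| car := coset_car; vzero := coset vzero; vadd := coset_add;
            vopp := coset_opp; vscal := coset_scal |}.
  - intros P1 P2 P3; coset_elim P1; coset_elim P2; coset_elim P3.
    rewrite !coset_add_coset, vadd_assoc; reflexivity.
  - intros P1 P2; coset_elim P1; coset_elim P2.
    rewrite !coset_add_coset, vadd_comm; reflexivity.
  - intros P; coset_elim P; rewrite coset_add_coset, vadd_0; reflexivity.
  - intros P; coset_elim P.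
    rewrite coset_opp_coset, coset_add_coset, vadd_opp; reflexivity.
  - intros a b P; coset_elim P.
    rewrite !coset_scal_coset, vscal_assoc; reflexivity.
  - intros P; coset_elim P; rewrite coset_scal_coset, vscal_1; reflexivity.
  - intros a P1 P2; coset_elim P1; coset_elim P2.
    rewrite coset_add_coset, !coset_scal_coset, coset_add_coset, vscal_distr_v.
    reflexivity.
  - intros a b P; coset_elim P.
    rewrite !coset_scal_coset, coset_add_coset, vscal_distr_s; reflexivity.
Defined.

Lemma coset_linear : @is_linear V quotient_space coset.
Proof.
  split; intros; simpl; [rewrite coset_add_coset | rewrite coset_scal_coset];
    reflexivity.
Qed.

End QuotientSpace.

Lemma is_glb_exists (E : R -> Prop) :
  (exists m, forall r, E r -> m <= r) -> (exists r, E r) -> {m | is_glb E m}.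
Proof.
  intros Hbelow Hne.
  destruct (completeness (fun s => E (- s))) as [m [Hub Hlub]].
  - destruct Hbelow as [m Hm]; exists (- m); intros s Hs.
    pose proof (Hm _ Hs); lra.
  - destruct Hne as [r Hr]; exists (- r); rewrite Ropp_involutive; exact Hr.
  - exists (- m); split.
    + intros r Hr; enough (- r <= m) by lra.
      apply Hub; rewrite Ropp_involutive; exact Hr.
    + intros m' Hm'; enough (m <= - m') by lra.
      apply Hlub; intros s Hs; pose proof (Hm' _ Hs); lra.
Qed.

Lemma infimum_gauge_exists (V Q : RVS) (nu : V -> R) (pi : V -> Q) :
  (forall x, 0 <= nu x) -> (forall z, exists y, pi y = z) ->
  exists q : Q -> R,
    forall z, is_glb (fun r => exists y, pi y = z /\ r = nu y) (q z).
Proof.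
  intros Hnu Hsurj.
  assert (Hglb : forall z,
    {m | is_glb (fun r => exists y, pi y = z /\ r = nu y) m}).
  { intros z; apply is_glb_exists.
    - exists 0; intros r [y [_ ->]]; apply Hnu.
    - destruct (Hsurj z) as [y Hy]; eauto. }
  exists (fun z => proj1_sig (Hglb z)); intros z; exact (proj2_sig (Hglb z)).
Qed.

Theorem proposition2p25 (V : RVS) (nu : V -> R) (S : V -> Prop) :
  is_proper_gauge nu -> is_subspace S ->
  (gauge_ideal nu S <->
     exists (W : RVS) (om : W -> R) (phi : V -> W),
       is_proper_gauge om /\ is_linear phi /\ gauge_bounded nu om phi /\
       kernel_is phi S)
  /\
  (gauge_ideal nu S ->
     forall (Q : RVS) (pi : V -> Q),
       is_linear pi -> (forall z : Q, exists y : V, pi y = z) ->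
       (forall x y : V, pi x = pi y <-> S (vsub x y)) ->
       forall q : Q -> R,
         (forall z : Q, is_glb (fun r => exists y : V, pi y = z /\ r = nu y) (q z)) ->
         is_proper_gauge q /\ gauge_contractive nu q pi /\ kernel_is pi S).
Proof.
  intros [nu_gauge _] HS.
  split; [split |].
  - intros HI.
    pose (Q := quotient_space V S HS).
    destruct (infimum_gauge_exists V Q nu (coset V S) (proj1 nu_gauge)
      (coset_surj V S)) as [q Hq].
    destruct (infimum_gauge_quotient V Q nu (coset V S) q nu_gauge
      (coset_linear V S HS) Hq S (coset_eq V S HS) HI) as [Hq_proper [Hq_contr Hker]].
    exists Q, q, (coset V S).
    split; [exact Hq_proper | split; [exact (coset_linear V S HS) |]].
    split; [apply gauge_bounded_of_contractive |]; assumption.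
  - intros [W [om [phi [Hom [Hphi [Hbound Hker]]]]]].
    exact (kernel_gauge_ideal V W nu om phi S HS Hom Hphi Hbound Hker).
  - intros HI Q pi Hpi _ Hfib q Hq.
    exact (infimum_gauge_quotient V Q nu pi q nu_gauge Hpi Hq S Hfib HI).
Qed.
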